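(* Let $I,J\in\mathcal I$. Then there is a reconfiguration sequence between $I$ and $J$ if and only if $I$ and $J$ are $\vartriangleleft$-equivalent.
   Context: Let $(a_i)_{i=1,\dots,n}$ be a sequence of distinct integers between $1$ and $n$, and set $a_0=0$; write $A=(a_i)_{i=0,1,\dots,n}$. A set $I\subseteq\{0\}\cup[n]$ is feasible if $a_i<a_j$ for all $i,j\in I$ with $i<j$; $\mathcal I$ denotes the family of feasible sets of maximum cardinality. A reconfiguration sequence between $I$ and $J$ is a sequence of feasible sets $I_0=I,I_1,\dots,I_\ell=J$ such that for each $1\le i\le\ell$, $I_i=(I_{i-1}\cup\{j\})\setminus\{k\}$ for some $j\notin I_{i-1}$, $k\in I_{i-1}$. Patience sorting: start with empty piles $P_0,\dots,P_n$; for $i=0,1,\dots,n$ in order, put $a_i$ on top of the pile $P_j$ with smallest index $j$ such that $P_j$ is empty or the top element of $P_j$ is greater than $a_i$. Let $P_0,\dots,P_k$ be the resulting nonempty piles. Say $a_u$ is placed below $a_v$ on a pile if both lie on the same pile and $a_u$ was put there before $a_v$. For $I,J\in\mathcal I$, write $I\vartriangleleft J$ if $I\setminus J=\{u\}$ and $J\setminus I=\{v\}$ for some $u,v$ such that $a_u$ is placed strictly below $a_v$ on pile $P_i$ for some $1\le i\le k$. For $I\in\mathcal I$, $\mathcal M(I)\subseteq\mathcal I$ is the smallest family containing $I$ such that whenever $J\in\mathcal M(I)$ and $J'\vartriangleleft J$ then $J'\in\mathcal M(I)$. A set is $\vartriangleleft$-minimal if there is no $J\in\mathcal I$ with $J\vartriangleleft$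 it; each $\mathcal M(I)$ contains exactly one $\vartriangleleft$-minimal set. Two sets $I,J\in\mathcal I$ are $\vartriangleleft$-equivalent if the $\vartriangleleft$-minimal set in $\mathcal M(I)$ equals the $\vartriangleleft$-minimal set in $\mathcal M(J)$. *)

From mathcomp Require Import all_boot.
Set Implicit Arguments. Unset Strict Implicit. Unset Printing Implicit Defensive.

(* Indices 0..n are elements of 'I_n.+1 (or nats).  The paper's a_1..a_n are
   a : 'I_n -> nat, with a j standing for a_{j+1}; a_0 = 0. *)
Definition Aseq (n : nat) (a : 'I_n -> nat) : nat -> nat :=
  fun i => nth 0 (0 :: [seq a j | j <- enum 'I_n]) i.

Section Defs.
Variables (n : nat) (a : 'I_n -> nat).
Local Notation A := (Aseq a).

Definition feasible (I : {set 'I_n.+1}) : Prop :=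
  forall i j : 'I_n.+1, i \in I -> j \in I -> i < j -> A i < A j.

(* members of the family \mathcal I: feasible of maximum cardinality *)
Definition maxfeas (I : {set 'I_n.+1}) : Prop :=
  feasible I /\ forall J, feasible J -> #|J| <= #|I|.

Definition rstep (I I' : {set 'I_n.+1}) : Prop :=
  exists j k, j \notin I /\ k \in I /\ I' = (I :|: [set j]) :\ k.

Fixpoint rpath (I : {set 'I_n.+1}) (s : seq {set 'I_n.+1}) : Prop :=
  match s with
  | [::] => True
  | I' :: s' => rstep I I' /\ rpath I' s'
  end.

Definition reconf (I J : {set 'I_n.+1}) : Prop :=
  exists s : seq {set 'I_n.+1},
    feasible I /\ (forall K, K \in s -> feasible K) /\ rpath I s /\ last I s = J.

(* A pile is a list of indices, top element first; the
   piles P_0, P_1, ... are kept in a list.  Nonempty piles always form a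
   prefix, so "the first pile that is empty or whose top is greater than a_x"
   is the first pile in the list with top greater than a_x, or a new pile. *)
Fixpoint place (x : nat) (ps : seq (seq nat)) : seq (seq nat) :=
  match ps with
  | [::] => [:: [:: x]]
  | p :: ps' => if A x < A (head 0 p) then (x :: p) :: ps' else p :: place x ps'
  end.

Definition piles : seq (seq nat) := foldl (fun ps i => place i ps) [::] (iota 0 n.+1).

Definition below (u v : nat) : Prop :=
  exists i, 1 <= i < size piles /\
    let p := nth [::] piles i in
    [/\ u \in p, v \in p, u != v & index v p < index u p].

Definition tri (I J : {set 'I_n.+1}) : Prop :=
  maxfeas I /\ maxfeas J /\
  exists u v : 'I_n.+1, I :\: J = [set u] /\ J :\: I = [set v] /\ below u v.

Inductive Mfam (I : {set 'I_n.+1}) : {set 'I_n.+1} -> Prop :=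
| Mfam_self : Mfam I I
| Mfam_pred J J' : Mfam I J -> tri J' J -> Mfam I J'.

Definition tri_minimal (K : {set 'I_n.+1}) : Prop :=
  ~ exists J, maxfeas J /\ tri J K.

Definition tri_equiv (I J : {set 'I_n.+1}) : Prop :=
  exists K, [/\ Mfam I K, Mfam J K & tri_minimal K].

End Defs.

(* Patience sorting puts a_i on pile P_j exactly when the longest feasible set
   ending at i has j + 1 elements.  Hence a maximum feasible set meets every pile
   exactly once, two of its members on different piles are increasing, and a
   reconfiguration step between maximum feasible sets exchanges two indices of the
   same pile P_j with j >= 1 (P_0 = {0}): it is a ◁-step in one direction or the
   other, and conversely every ◁-step is a reconfiguration step.
   The relation ◁ strictly decreases the sum of the indices and is locally
   confluent: two ◁-predecessors of I either remove the same element of I, and are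
   then ◁-comparable, or remove elements of different piles, and then performing
   both exchanges gives a common predecessor.  By Newman's lemma every M(I) has a
   unique ◁-minimal set; it is invariant under ◁-steps, hence along
   reconfiguration sequences, and conversely I and J are both reachable from a
   common ◁-minimal set. *)

From mathcomp Require Import all_boot.
From Stdlib Require Import Classical_Prop.
Set Implicit Arguments. Unset Strict Implicit. Unset Printing Implicit Defensive.

Section Swap.
Variable T : finType.
Implicit Types (X Y : {set T}) (u v : T).

Definition swap X u v := (X :|: [set u]) :\ v.

Lemma swap_neq X u v : u \notin X -> v \in X -> (u == v) = false.
Proof. by move=> uX vX; apply/negbTE; apply: contraNneq uX => ->. Qed.

Lemma swap_diff X u v : u \notin X -> v \in X ->
  swap X u v :\: X = [set u] /\ X :\: swap X u v = [set v].
Proof.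
move=> uX vX; split; apply/setP => z; rewrite /swap !inE.
- have [->|_] := eqVneq z u; first by rewrite (swap_neq uX vX) uX orbT.
  by case: (z == v); case: (z \in X).
- have [->|_] := eqVneq z v; first by rewrite vX.
  by case: (z == u); case: (z \in X).
Qed.

Lemma diff_swap X Y u v : X :\: Y = [set u] -> Y :\: X = [set v] ->
  [/\ X = swap Y u v, u \notin Y & v \in Y].
Proof.
move=> dXY dYX; have uXY : u \in X :\: Y by rewrite dXY set11.
have vYX : v \in Y :\: X by rewrite dYX set11.
rewrite !inE in uXY vYX; case/andP: uXY => -> _; case/andP: vYX => _ ->.
split => //; apply/setP => z; move/setP/(_ z): dXY; move/setP/(_ z): dYX.
by rewrite /swap !inE; case: (z \in X); case: (z \in Y); case: (z == u); case: (z == v).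
Qed.

Lemma swapK X u v : u \notin X -> v \in X -> swap (swap X u v) v u = X.
Proof.
move=> uX vX; apply/setP => z; rewrite /swap !inE.
have [->|_] := eqVneq z u; first by rewrite (negPf uX).
by rewrite orbF; have [->|] := eqVneq z v; rewrite ?vX ?orbF ?orbT.
Qed.

Lemma card_swap X u v : u \notin X -> v \in X -> #|swap X u v| = #|X|.
Proof.
move=> uX vX; have := cardsD1 v (X :|: [set u]); rewrite /swap.
by rewrite !inE vX setUC cardsU1 uX add1n => -[].
Qed.

Lemma mem_swap_neq X u v (x : T) : x \in swap X u v -> x != u -> x \in X.
Proof. by rewrite /swap !inE => /andP[_ /orP[//|/eqP->]]; rewrite eqxx. Qed.

Lemma swapC X u1 v1 u2 v2 : u1 \notin X -> u2 \notin X -> v1 \in X -> v2 \in X ->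
  swap (swap X u1 v1) u2 v2 = swap (swap X u2 v2) u1 v1.
Proof.
move=> u1X u2X v1X v2X; apply/setP => z; rewrite /swap !inE.
have [->|_] := eqVneq z u1; first by rewrite (swap_neq u1X v1X) (swap_neq u1X v2X) !orbT.
have [->|_] := eqVneq z u2; first by rewrite (swap_neq u2X v1X) (swap_neq u2X v2X) !orbT.
by rewrite !orbF; case: (z == v1); case: (z == v2).
Qed.

Lemma swap_swap X u1 u2 v : u1 \notin X -> u2 \notin X -> v \in X -> u1 != u2 ->
  swap (swap X u2 v) u1 u2 = swap X u1 v.
Proof.
move=> u1X u2X vX nu12; apply/setP => z; rewrite /swap !inE.
have [->|_] := eqVneq z u2; first by rewrite (negPf u2X) [u2 == u1]eq_sym (negPf nu12) andbF.
have [->|_] := eqVneq z u1; first by rewrite (swap_neq u1X vX) !orbT.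
by rewrite !orbF.
Qed.

End Swap.

Lemma pairwise_total (T : eqType) (r : rel T) s x y : pairwise r s ->
  x \in s -> y \in s -> x != y -> r x y || r y x.
Proof.
move=> /(pairwiseP x) r_s x_s y_s nxy.
have [i_s j_s] : index x s < size s /\ index y s < size s by rewrite !index_mem.
case: (ltngtP (index x s) (index y s)) => [lt|gt|eq].
- by have := r_s _ _ i_s j_s lt; rewrite !nth_index // => ->.
- by have := r_s _ _ j_s i_s gt; rewrite !nth_index // => ->; rewrite orbT.
- by move: nxy; rewrite -(nth_index x x_s) eq nth_index ?eqxx.
Qed.

Lemma sum_swap_lt m (X : {set 'I_m}) u v : u \notin X -> v \in X -> u < v ->
  \sum_(x in swap X u v) (x : nat) < \sum_(x in X) (x : nat).
Proof.
move=> uX vX ltuv; have nuv : u != v by rewrite neq_ltn ltuv.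
have -> : swap X u v = u |: (X :\ v).
  by apply/setP => z; rewrite /swap !inE; have [->|] := eqVneq z u; rewrite ?nuv ?orbF ?orbT.
rewrite big_setU1 /=; last by rewrite !inE (negPf uX) andbF.
by rewrite [X in _ < X](big_setD1 v) //= ltn_add2r.
Qed.

Section Reconfiguration.
Variables (n : nat) (a : 'I_n -> nat).
Implicit Types I J K : {set 'I_n.+1}.

Lemma Mfam_trans I J K : Mfam a I J -> Mfam a J K -> Mfam a I K.
Proof. by move=> mIJ; elim=> // J1 J2 _ mIJ1 t; exact: Mfam_pred mIJ1 t. Qed.

Lemma Mfam_tri J' J : tri a J' J -> Mfam a J J'.
Proof. exact: Mfam_pred (Mfam_self _ _). Qed.

Lemma Mfam_cases I K : Mfam a I K -> K = I \/ exists2 J, tri a J I & Mfam a J K.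
Proof.
elim=> [|J J' _ [->|[J0 t m]] t']; [by left | right | right].
  by exists J'; last exact: Mfam_self.
by exists J0; last exact: Mfam_pred m t'.
Qed.

Lemma rpath_cat I s1 s2 : rpath I (s1 ++ s2) <-> rpath I s1 /\ rpath (last I s1) s2.
Proof.
elim: s1 I => [|J s1 IH] I /=; first by split=> // -[].
by rewrite IH; split=> [[? [? ?]]|[[? ?] ?]].
Qed.

Lemma reconf_trans I J K : reconf a I J -> reconf a J K -> reconf a I K.
Proof.
move=> [s1 [fI [f1 [p1 <-]]]] [s2 [_ [f2 [p2 <-]]]]; exists (s1 ++ s2).
split=> //; split; first by move=> X; rewrite mem_cat => /orP[/f1|/f2].
by rewrite rpath_cat last_cat.
Qed.

Lemma reconf_rstep I J : feasible a I -> feasible a J -> rstep I J -> reconf a I J.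
Proof. by move=> fI fJ st; exists [:: J]; split=> //; split=> // X /[!inE] /eqP->. Qed.

End Reconfiguration.

Section PatienceSorting.
Variables (n : nat) (a : 'I_n -> nat).
Hypotheses (a_inj : injective a) (a_gt0 : forall j, 0 < a j).
Local Notation A := (Aseq a).

Lemma AseqS k (lt_kn : k < n) : A k.+1 = a (Ordinal lt_kn).
Proof.
rewrite /Aseq /= (nth_map (Ordinal lt_kn)) ?size_enum_ord //.
by rewrite (nth_ord_enum (Ordinal lt_kn) (Ordinal lt_kn)).
Qed.

Lemma Aseq_inj x y : x <= n -> y <= n -> A x = A y -> x = y.
Proof.
case: x => [|x]; case: y => [|y] //= lexn leyn.
- by move=> e; have := a_gt0 (Ordinal leyn); rewrite -AseqS -e.
- by move=> e; have := a_gt0 (Ordinal lexn); rewrite -AseqS e.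
by rewrite (AseqS lexn) (AseqS leyn) => /a_inj [->].
Qed.

Definition incr x y := (x < y) && (A x < A y).

Definition decr x y := (x < y) && (A y < A x).

Lemma decr_trans : transitive decr.
Proof.
move=> y x z /andP[xy Ayx] /andP[yz Azy].
by rewrite /decr (ltn_trans xy yz) (ltn_trans Azy Ayx).
Qed.

Definition slot x (ps : seq (seq nat)) := find (fun p => A x < A (head 0 p)) ps.

Lemma placeE x ps : place a x ps = set_nth [::] ps (slot x ps) (x :: nth [::] ps (slot x ps)).
Proof. by elim: ps => [|p ps IH] //=; rewrite /slot /=; case: ifP => //= _; rewrite -IH. Qed.

Record pile_inv m ps : Prop := PileInv {
  pile_lt : forall (y : nat) j, y \in nth [::] ps j -> y < m;
  pile_ex : forall y : nat, y < m -> exists j, y \in nth [::] ps j;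
  pile_uniq : forall (y : nat) j j', y \in nth [::] ps j -> y \in nth [::] ps j' -> j = j';
  pile_nonempty : forall j, j < size ps -> nth [::] ps j != [::];
  pile_sorted : forall j, pairwise (fun x y => decr y x) (nth [::] ps j);
  top_incr : forall j, j.+1 < size ps ->
    A (head 0 (nth [::] ps j)) < A (head 0 (nth [::] ps j.+1));
  incr_pile_lt : forall (x y : nat) j j', x \in nth [::] ps j -> y \in nth [::] ps j' ->
    incr x y -> j < j';
  pile_pred : forall (x : nat) j, x \in nth [::] ps j.+1 ->
    exists2 y, y \in nth [::] ps j & incr y x;
  pile0 : forall x : nat, x \in nth [::] ps 0 -> x = 0 }.

Lemma pile_inv0 : pile_inv 0 [::].
Proof. by split=> // [y j|y j j'|j|x y j j']; rewrite nth_nil. Qed.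

Lemma mem_pile_size ps (y : nat) j : y \in nth [::] ps j -> j < size ps.
Proof. by case: (ltnP j (size ps)) => // le_ps_j; rewrite nth_default. Qed.

Section Place.
Variables (m : nat) (ps : seq (seq nat)).
Hypotheses (le_mn : m <= n) (iv : pile_inv m ps).
Let i := slot m ps.

Lemma top_mem j : j < size ps -> head 0 (nth [::] ps j) \in nth [::] ps j.
Proof. by move/(pile_nonempty iv); case: (nth [::] ps j) => //= y p _; exact: mem_head. Qed.

Lemma top_mono j j' : j <= j' -> j' < size ps ->
  A (head 0 (nth [::] ps j)) <= A (head 0 (nth [::] ps j')).
Proof.
elim: j' => [|j' IH]; first by rewrite leqn0 => /eqP->.
rewrite leq_eqVlt => /orP[/eqP->//|le_j_j'] lt_j'_ps.
exact: leq_trans (IH le_j_j' (ltnW lt_j'_ps)) (ltnW (top_incr iv lt_j'_ps)).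
Qed.

Lemma top_le y j : y \in nth [::] ps j -> A (head 0 (nth [::] ps j)) <= A y.
Proof.
have := pile_sorted iv j; case: (nth [::] ps j) => // x p /= /andP[/allP x_p _].
by rewrite inE => /orP[/eqP->//|/x_p /andP[_ /ltnW]].
Qed.

Lemma Aseq_neq_new y : y < m -> A y != A m.
Proof.
move=> lt_ym; apply: contraTneq (lt_ym) => /Aseq_inj-> //; first by rewrite ltnn.
exact: leq_trans (ltnW lt_ym) le_mn.
Qed.

Lemma slot_le_size : i <= size ps.
Proof. exact: find_size. Qed.

Lemma top_lt_new j : j < i -> A (head 0 (nth [::] ps j)) < A m.
Proof.
move=> lt_ji; have := before_find [::] lt_ji => /negbT; rewrite -leqNgt ltn_neqAle => ->.
rewrite andbT Aseq_neq_new //.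
exact: (pile_lt iv (top_mem (leq_trans lt_ji slot_le_size))).
Qed.

Lemma new_lt_top : i < size ps -> A m < A (head 0 (nth [::] ps i)).
Proof. by rewrite /i /slot -has_find => /(nth_find [::]). Qed.

Let ps' := place a m ps.

Lemma nth_place j : nth [::] ps' j = if j == i then m :: nth [::] ps i else nth [::] ps j.
Proof. by rewrite /ps' placeE nth_set_nth. Qed.

Lemma size_place j : (j < size ps') = (j == i) || (j < size ps).
Proof.
rewrite /ps' placeE size_set_nth leq_max ltnS leq_eqVlt -/i.
have [->|_] //= := eqVneq j i; have [lt_ji|//] := ltnP j i.
by rewrite (leq_trans lt_ji slot_le_size) orbT.
Qed.

Lemma mem_place y j : y != m -> (y \in nth [::] ps' j) = (y \in nth [::] ps j).
Proof. by move=> nym; rewrite nth_place; case: eqP => [->|] //; rewrite inE (negPf nym). Qed.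

Lemma mem_place_new j : (m \in nth [::] ps' j) = (j == i).
Proof.
rewrite nth_place; case: eqP => _; first exact: mem_head.
by apply/negP => /(pile_lt iv); rewrite ltnn.
Qed.

Lemma place_incr_pile_lt x y j j' : x \in nth [::] ps' j -> y \in nth [::] ps' j' ->
  incr x y -> j < j'.
Proof.
have [->|nxm] := eqVneq x m.
  have [->|nym] := eqVneq y m; first by move=> _ _; rewrite /incr ltnn.
  by rewrite [y \in _]mem_place // => _ /(pile_lt iv) lt_ym /andP[/(ltn_trans lt_ym)]; rewrite ltnn.
rewrite [x \in _]mem_place //; have [->|nym] := eqVneq y m; last first.
  by rewrite [y \in _]mem_place //; exact: (incr_pile_lt iv).
rewrite mem_place_new => x_j /eqP-> /andP[_ Axm]; rewrite ltnNge; apply/negP => le_ij.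
have j_ps := mem_pile_size x_j.
have := leq_trans (top_mono le_ij j_ps) (top_le x_j).
by rewrite leqNgt (ltn_trans Axm (new_lt_top (leq_ltn_trans le_ij j_ps))).
Qed.

Lemma place_pile_pred x j : x \in nth [::] ps' j.+1 -> exists2 y, y \in nth [::] ps' j & incr y x.
Proof.
have [->|nxm] := eqVneq x m.
  rewrite mem_place_new => /eqP ji.
  have lt_j_ps : j < size ps by rewrite (leq_trans _ slot_le_size) // ji.
  have top_lt_m := pile_lt iv (top_mem lt_j_ps).
  exists (head 0 (nth [::] ps j)); last by rewrite /incr top_lt_m top_lt_new // -ji.
  by rewrite mem_place ?top_mem // neq_ltn top_lt_m.
rewrite mem_place // => x_j; have [y y_j lt_yx] := pile_pred iv x_j.
exists y => //; rewrite mem_place // neq_ltn.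
by rewrite (ltn_trans (proj1 (andP lt_yx)) (pile_lt iv x_j)).
Qed.

Lemma place_pile0 x : x \in nth [::] ps' 0 -> x = 0.
Proof.
have [->|nxm] := eqVneq x m; last by rewrite mem_place //; exact: (pile0 iv).
rewrite mem_place_new => /eqP i0; have [//|m_gt0] := posnP m.
have [j zero_j] := pile_ex iv m_gt0.
have ps_gt0 : 0 < size ps by case: (size ps) (mem_pile_size zero_j).
(* For m > 0 the pile P_0 already exists with top 0, and A m < A 0 = 0 is impossible. *)
have := new_lt_top; rewrite -i0 (pile0 iv (top_mem ps_gt0)) => /(_ ps_gt0).
by rewrite /Aseq.
Qed.

Lemma place_top_incr j : j.+1 < size ps' ->
  A (head 0 (nth [::] ps' j)) < A (head 0 (nth [::] ps' j.+1)).
Proof.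
rewrite size_place !nth_place.
have [ji|nji] := eqVneq j i; have [j1i|nj1i] := eqVneq j.+1 i => //= lt_j1.
- by move: j1i; rewrite ji => /esym /n_Sn.
- by rewrite (ltn_trans _ (top_incr iv lt_j1)) // ji new_lt_top // -ji (ltnW lt_j1).
- by rewrite top_lt_new // -j1i.
- exact: (top_incr iv).
Qed.

Lemma pile_inv_place : pile_inv m.+1 ps'.
Proof.
split.
- move=> y j; have [->//|nym] := eqVneq y m.
  by rewrite mem_place // => /(pile_lt iv) /ltnW.
- move=> y; rewrite ltnS leq_eqVlt => /orP[/eqP->|lt_ym].
    by exists i; rewrite mem_place_new.
  have [j y_j] := pile_ex iv lt_ym; exists j.
  by rewrite mem_place // neq_ltn lt_ym.
- move=> y j j'; have [->|nym] := eqVneq y m; first by rewrite !mem_place_new => /eqP-> /eqP->.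
  by rewrite !mem_place //; exact: (pile_uniq iv).
- move=> j; rewrite size_place nth_place => /orP[/eqP->|lt_j_ps]; first by rewrite eqxx.
  by case: (j =P i) => // _; exact: (pile_nonempty iv lt_j_ps).
- move=> j; rewrite nth_place; case: (j =P i) => _; last exact: (pile_sorted iv).
  rewrite /= (pile_sorted iv) andbT; apply/allP => y y_i.
  rewrite /decr (pile_lt iv y_i).
  exact: leq_trans (new_lt_top (mem_pile_size y_i)) (top_le y_i).
- exact: place_top_incr.
- exact: place_incr_pile_lt.
- exact: place_pile_pred.
- exact: place_pile0.
Qed.

End Place.

Lemma pile_inv_piles : pile_inv n.+1 (piles a).
Proof.
suff inv_m m : m <= n.+1 -> pile_inv m (foldl (fun ps i => place a i ps) [::] (iota 0 m)).
  exact: inv_m.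
elim: m => [|m IH] le_m; first exact: pile_inv0.
by rewrite -addn1 iotaD foldl_cat add0n addn1; apply: pile_inv_place => //; exact: IH (ltnW le_m).
Qed.

Local Notation P := (piles a).
Implicit Types (x y u v : 'I_n.+1) (S I J L : {set 'I_n.+1}).

Definition pile x : nat := find (fun p => (x : nat) \in p) P.

Lemma has_pile x : has (fun p => (x : nat) \in p) P.
Proof.
have [j x_j] := pile_ex pile_inv_piles (ltn_ord x).
by apply/hasP; exists (nth [::] P j); rewrite // mem_nth // (mem_pile_size x_j).
Qed.

Lemma mem_pile x : (x : nat) \in nth [::] P (pile x).
Proof. exact: nth_find (has_pile x). Qed.

Lemma pile_lt_size x : pile x < size P.
Proof. by rewrite /pile -has_find has_pile. Qed.

Lemma pile_of_mem x j : (x : nat) \in nth [::] P j -> pile x = j.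
Proof. exact: (pile_uniq pile_inv_piles (mem_pile x)). Qed.

Lemma pile_eq0 x : pile x = 0 -> (x : nat) = 0.
Proof. by move=> px0; apply: (pile0 pile_inv_piles); rewrite -px0 mem_pile. Qed.

Lemma pile_gt0 x y : pile x = pile y -> x != y -> 0 < pile x.
Proof.
move=> pxy; apply: contraNT; rewrite -eqn0Ngt => /eqP px0.
by apply/eqP/val_inj; rewrite /= (pile_eq0 px0) pile_eq0 // -pxy.
Qed.

Lemma pile_lt_of_incr x y : incr x y -> pile x < pile y.
Proof. exact: (incr_pile_lt pile_inv_piles (mem_pile x) (mem_pile y)). Qed.

Lemma same_pile_decr x y : pile x = pile y -> x < y -> decr x y.
Proof.
move=> pxy lt_xy; have sorted_p := pile_sorted pile_inv_piles (pile x).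
have x_p := mem_pile x; have y_p := mem_pile y; rewrite -pxy in y_p.
have nyx : (y : nat) != x by rewrite neq_ltn lt_xy orbT.
have /orP[//|/andP[lt_yx _]] := pairwise_total sorted_p y_p x_p nyx.
by rewrite ltnNge (ltnW lt_yx) in lt_xy.
Qed.

Lemma pile_index_decr j (x y : nat) : x \in nth [::] P j -> y \in nth [::] P j ->
  index y (nth [::] P j) < index x (nth [::] P j) -> decr x y.
Proof.
have sorted_p : sorted (fun x y : nat => decr y x) (nth [::] P j).
  by rewrite sorted_pairwise ?(pile_sorted pile_inv_piles) //; exact: rev_trans decr_trans.
by move=> x_p y_p; exact: (sorted_ltn_index (rev_trans decr_trans) sorted_p y x y_p x_p).
Qed.

Lemma belowP u v : below a u v <-> [/\ pile u = pile v, 0 < pile u & u < v].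
Proof.
split.
  case=> j [/andP[j_gt0 _]] /= [u_j v_j _ /(pile_index_decr u_j v_j) /andP[lt_uv _]].
  by rewrite (pile_of_mem u_j) (pile_of_mem v_j).
case=> puv pu_gt0 lt_uv; exists (pile u); rewrite pu_gt0 pile_lt_size /=.
have u_p := mem_pile u; have v_p := mem_pile v; rewrite -puv in v_p.
split=> //; split=> //; first by rewrite neq_ltn lt_uv.
case: (ltngtP (index (v : nat) (nth [::] P (pile u))) (index (u : nat) _)) => // [|eq_uv].
  by move/(pile_index_decr v_p u_p) => /andP[lt_vu _]; rewrite ltnNge (ltnW lt_vu) in lt_uv.
by move: lt_uv; rewrite -(nth_index 0 u_p) -eq_uv (nth_index 0 v_p) ltnn.
Qed.

Lemma feasible_incr S x y : feasible a S -> x \in S -> y \in S -> x < y -> incr x y.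
Proof. by move=> fS xS yS lt_xy; rewrite /incr lt_xy (fS x y). Qed.

Lemma feasible_pile_lt S x y : feasible a S -> x \in S -> y \in S ->
  pile x < pile y -> incr x y.
Proof.
move=> fS xS yS lt_pxy; case: (ltngtP x y) => [lt_xy|lt_yx|/val_inj eq_xy].
- exact: feasible_incr fS xS yS lt_xy.
- by have := pile_lt_of_incr (feasible_incr fS yS xS lt_yx); rewrite ltnNge (ltnW lt_pxy).
- by rewrite eq_xy ltnn in lt_pxy.
Qed.

Lemma feasible_pile_inj S : feasible a S -> {in S &, injective pile}.
Proof.
move=> fS x y xS yS pxy; case: (ltngtP x y) => [lt_xy|lt_yx|/val_inj//].
- by have := pile_lt_of_incr (feasible_incr fS xS yS lt_xy); rewrite pxy ltnn.
- by have := pile_lt_of_incr (feasible_incr fS yS xS lt_yx); rewrite pxy ltnn.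
Qed.

Lemma feasible_chain j x : (x : nat) \in nth [::] P j -> exists S, [/\ feasible a S,
  #|S| = j.+1 & {in S, forall y, y <= x /\ A y <= A x}].
Proof.
elim: j x => [|j IH] x x_j.
  exists [set x]; rewrite cards1; split=> // [y z|y]; rewrite !inE.
    by move=> /eqP-> /eqP->; rewrite ltnn.
  by move=> /eqP->.
have [y' y'_j /andP[lt_y'x Ay'x]] := pile_pred pile_inv_piles x_j.
have lt_y'n : y' < n.+1 := ltn_trans lt_y'x (ltn_ord x).
pose y : 'I_n.+1 := Ordinal lt_y'n.
have [S [fS cardS below_y]] := IH y y'_j.
have xS : x \notin S by apply/negP => /below_y [+ _]; rewrite leqNgt lt_y'x.
exists (x |: S); rewrite cardsU1 xS cardS; split=> // [z w|z].
  rewrite !inE => /predU1P[->|zS] /predU1P[->|wS] lt_zw.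
  - by rewrite ltnn in lt_zw.
  - have [le_wy _] := below_y w wS.
    by have := leq_ltn_trans le_wy (ltn_trans lt_y'x lt_zw); rewrite ltnn.
  - have [_ Azy] := below_y z zS; exact: leq_ltn_trans Azy Ay'x.
  - exact: fS lt_zw.
rewrite !inE => /predU1P[->//|zS]; have [le_zy Azy] := below_y z zS.
by split; [exact: leq_trans le_zy (ltnW lt_y'x) | exact: leq_trans Azy (ltnW Ay'x)].
Qed.

Lemma pile_map_uniq S : feasible a S -> uniq (map pile (enum S)).
Proof.
move=> fS; rewrite map_inj_in_uniq ?enum_uniq // => x y.
by rewrite !mem_enum; exact: feasible_pile_inj.
Qed.

Lemma pile_map_sub S : {subset map pile (enum S) <= iota 0 (size P)}.
Proof. by move=> _ /mapP[x _ ->]; rewrite mem_iota pile_lt_size. Qed.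

Lemma card_feasible S : feasible a S -> #|S| <= size P.
Proof.
move=> fS; rewrite cardE -(size_map pile) -(size_iota 0 (size P)).
exact: uniq_leq_size (pile_map_uniq fS) (@pile_map_sub S).
Qed.

Lemma exists_feasible_max : exists S, feasible a S /\ #|S| = size P.
Proof.
have P_gt0 : 0 < size P by have := pile_lt_size ord0; case: (size P).
have lastP : (size P).-1 < size P by rewrite prednK.
pose t := head 0 (nth [::] P (size P).-1).
have t_last : t \in nth [::] P (size P).-1 := top_mem pile_inv_piles lastP.
have t_ord : ((inord t : 'I_n.+1) : nat) \in nth [::] P (size P).-1.
  by rewrite inordK // (pile_lt pile_inv_piles t_last).
have [S [fS cardS _]] := feasible_chain t_ord.
by exists S; rewrite cardS prednK.
Qed.

Lemma maxfeas_card I : maxfeas a I -> #|I| = size P.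
Proof.
case=> fI maxI; apply/eqP; rewrite eqn_leq card_feasible //.
by have [S [fS <-]] := exists_feasible_max; exact: maxI.
Qed.

Lemma maxfeas_of_card S : feasible a S -> #|S| = size P -> maxfeas a S.
Proof. by move=> fS cardS; split=> // J fJ; rewrite cardS card_feasible. Qed.

Lemma maxfeas_pile_surj I j : maxfeas a I -> j < size P -> exists2 x, x \in I & pile x = j.
Proof.
move=> mI lt_jP.
have le_size : size (iota 0 (size P)) <= size (map pile (enum I)).
  by rewrite size_iota size_map -cardE maxfeas_card.
have [_ eq_map] := uniq_min_size (pile_map_uniq mI.1) (@pile_map_sub I) le_size.
have : j \in map pile (enum I) by rewrite eq_map mem_iota.
by case/mapP=> x; rewrite mem_enum => xI ->; exists x.
Qed.

Definition tri_swap I u v :=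
  [/\ maxfeas a I, maxfeas a (swap I u v), u \notin I, v \in I & below a u v].

Lemma triP J' J : tri a J' J <-> exists u v, tri_swap J u v /\ J' = swap J u v.
Proof.
split=> [[mJ' [mJ [u [v [dJ'J [dJJ' b]]]]]] | [u [v [[mJ msw uJ vJ b] ->]]]].
  by have [eJ' uJ vJ] := diff_swap dJ'J dJJ'; exists u, v; rewrite /tri_swap -eJ'.
by have [d1 d2] := swap_diff uJ vJ; do 2!split=> //; exists u, v.
Qed.

Lemma mem_swap_out I u v : u \notin I -> v \in I -> (u \in swap I u v) && (v \notin swap I u v).
Proof. by move=> uI vI; rewrite /swap !inE !eqxx (swap_neq uI vI) orbT. Qed.

Lemma tri_rstep J' J : tri a J' J -> rstep J J' /\ rstep J' J.
Proof.
case/triP=> u [v [[_ _ uJ vJ _] ->]]; split; first by exists u, v.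
have /andP[u_sw v_sw] := mem_swap_out uJ vJ.
by exists v, u; do 2!split=> //; exact: (esym (swapK uJ vJ)).
Qed.

Lemma swap_same_pile I j k : maxfeas a I -> maxfeas a (swap I j k) ->
  j \notin I -> k \in I -> pile j = pile k.
Proof.
move=> mI msw jI kI; have [z z_sw pzk] := maxfeas_pile_surj msw (pile_lt_size k).
have [<-//|nzj] := eqVneq z j.
move: z_sw; rewrite /swap !inE (negPf nzj) orbF => /andP[nzk zI].
by move: nzk; rewrite (feasible_pile_inj mI.1 zI kI pzk) eqxx.
Qed.

Lemma rstep_tri I I' : maxfeas a I -> feasible a I' -> rstep I I' ->
  maxfeas a I' /\ (tri a I' I \/ tri a I I').
Proof.
move=> mI fI' [j [k [jI [kI eI']]]]; subst I'; rewrite -/(swap I j k).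
have msw : maxfeas a (swap I j k).
  by apply: maxfeas_of_card; rewrite // card_swap // maxfeas_card.
have pjk := swap_same_pile mI msw jI kI.
have njk : j != k by rewrite (swap_neq jI kI).
have /andP[j_sw k_sw] := mem_swap_out jI kI.
split=> //; case: (ltngtP j k) => [lt_jk|lt_kj|/val_inj ejk].
- left; apply/triP; exists j, k; split=> //; split=> //.
  by apply/belowP; split=> //; exact: pile_gt0 pjk njk.
- right; apply/triP; exists k, j; rewrite swapK //; split=> //; split; rewrite ?swapK //.
  by apply/belowP; split=> //; rewrite -pjk; exact: pile_gt0 pjk njk.
- by rewrite ejk eqxx in njk.
Qed.

Definition weight S := \sum_(x in S) (x : nat).

Lemma tri_weight J' J : tri a J' J -> weight J' < weight J.
Proof. by case/triP=> u [v [[_ _ uJ vJ /belowP[_ _ lt_uv]] ->]]; exact: sum_swap_lt. Qed.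

Lemma tri_swap_same I u1 u2 v : tri_swap I u1 v -> tri_swap I u2 v -> u1 < u2 ->
  tri a (swap I u1 v) (swap I u2 v).
Proof.
case=> _ m1 u1I vI /belowP[p1 p1_gt0 _] [_ m2 u2I _ /belowP[p2 _ _]] lt_u12.
have nu12 : u1 != u2 by rewrite neq_ltn lt_u12.
have /andP[u2_sw _] := mem_swap_out u2I vI.
apply/triP; exists u1, u2; rewrite /tri_swap swap_swap //; split=> //; split=> //.
  by rewrite /swap !inE (negPf u1I) (negPf nu12) andbF.
by apply/belowP; split=> //; rewrite p1 p2.
Qed.

Lemma tri_swap_incr I u1 v1 u2 v2 : tri_swap I u1 v1 -> tri_swap I u2 v2 ->
  pile v1 < pile v2 -> incr u1 u2.
Proof.
case=> _ m1 u1I v1I /belowP[p1 _ lt_uv1] [_ m2 u2I v2I /belowP[p2 _ lt_uv2]] lt_p12.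
have nv12 : v2 != v1 by apply: contraTneq lt_p12 => ->; rewrite ltnn.
have /andP[u1_J1 _] := mem_swap_out u1I v1I.
have /andP[u2_J2 _] := mem_swap_out u2I v2I.
have v2_J1 : v2 \in swap I u1 v1 by rewrite /swap !inE nv12 v2I.
have v1_J2 : v1 \in swap I u2 v2 by rewrite /swap !inE eq_sym nv12 v1I.
have /andP[_ A_u1v2] : incr u1 v2 by apply: feasible_pile_lt m1.1 u1_J1 v2_J1 _; rewrite p1.
have /andP[lt_v1u2 _] : incr v1 u2 by apply: feasible_pile_lt m2.1 v1_J2 u2_J2 _; rewrite p2.
have /andP[_ A_v2u2] := same_pile_decr p2 lt_uv2.
by rewrite /incr (ltn_trans lt_uv1 lt_v1u2) (ltn_trans A_u1v2 A_v2u2).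
Qed.

Lemma feasible_patch L J1 J2 u1 u2 : feasible a J1 -> feasible a J2 ->
  {in L, forall x, x != u2 -> x \in J1} -> {in L, forall x, x != u1 -> x \in J2} ->
  incr u1 u2 || incr u2 u1 -> feasible a L.
Proof.
move=> f1 f2 LJ1 LJ2 u12 x y xL yL lt_xy.
have [/andP[nxu2 nyu2]|xy_u2] := boolP ((x != u2) && (y != u2)).
  exact: f1 (LJ1 x xL nxu2) (LJ1 y yL nyu2) lt_xy.
have [/andP[nxu1 nyu1]|] := boolP ((x != u1) && (y != u1)).
  exact: f2 (LJ2 x xL nxu1) (LJ2 y yL nyu1) lt_xy.
move: xy_u2; rewrite !negb_and !negbK => /orP[]/eqP ex2 /orP[]/eqP e1; subst.
- by rewrite /incr ltnn in u12.
- by case/orP: u12 => /andP[lt_u _] //; rewrite ltnNge (ltnW lt_u) in lt_xy.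
- by case/orP: u12 => /andP[lt_u _] //; rewrite ltnNge (ltnW lt_u) in lt_xy.
- by rewrite /incr ltnn in u12.
Qed.

Lemma tri_swap_diamond I u1 v1 u2 v2 : tri_swap I u1 v1 -> tri_swap I u2 v2 -> v1 != v2 ->
  exists L, tri a L (swap I u1 v1) /\ tri a L (swap I u2 v2).
Proof.
move=> s1 s2 nv12; case: (s1) (s2) => mI m1 u1I v1I b1 [_ m2 u2I v2I b2].
have [p1 _ _] := (belowP u1 v1).1 b1; have [p2 _ _] := (belowP u2 v2).1 b2.
have np12 : pile v1 != pile v2 by apply: contra nv12 => /eqP/(feasible_pile_inj mI.1 v1I v2I)->.
have nu12 : u1 != u2 by apply: contraNneq np12 => e12; rewrite -p1 -p2 e12.
have u2_J1 : u2 \notin swap I u1 v1.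
  by rewrite /swap !inE (negPf u2I) [u2 == u1]eq_sym (negPf nu12) andbF.
have v2_J1 : v2 \in swap I u1 v1 by rewrite /swap !inE eq_sym nv12 v2I.
have u1_J2 : u1 \notin swap I u2 v2 by rewrite /swap !inE (negPf u1I) (negPf nu12) andbF.
have v1_J2 : v1 \in swap I u2 v2 by rewrite /swap !inE nv12 v1I.
have eL := swapC u1I u2I v1I v2I.
have fL : feasible a (swap (swap I u1 v1) u2 v2).
  apply: (feasible_patch (u1 := u1) (u2 := u2) m1.1 m2.1) => [x /mem_swap_neq//|x|].
    by rewrite eL => /mem_swap_neq.
  case: (ltngtP (pile v1) (pile v2)) => [lt12|lt21|/eqP]; last by rewrite (negPf np12).
  - by rewrite (tri_swap_incr s1 s2 lt12).
  - by rewrite (tri_swap_incr s2 s1 lt21) orbT.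
have mL : maxfeas a (swap (swap I u1 v1) u2 v2).
  by apply: maxfeas_of_card; rewrite // !card_swap // maxfeas_card.
exists (swap (swap I u1 v1) u2 v2); split; apply/triP.
  by exists u2, v2.
by exists u1, v1; rewrite /tri_swap -eL.
Qed.

Definition min_of I K := Mfam a I K /\ tri_minimal a K.

Lemma exists_min_of I : exists K, min_of I K.
Proof.
have [m] := ubnP (weight I); elim: m I => // m IH I lt_wI.
have [[J [_ tJI]]|no_tri] := classic (exists J, maxfeas a J /\ tri a J I).
  have [K [mJK minK]] := IH J (leq_trans (tri_weight tJI) lt_wI).
  by exists K; split=> //; exact: Mfam_trans (Mfam_tri tJI) mJK.
by exists I; split=> //; exact: Mfam_self.
Qed.

Lemma tri_local_confluence I J1 J2 : tri a J1 I -> tri a J2 I ->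
  exists L, Mfam a J1 L /\ Mfam a J2 L.
Proof.
move=> /triP[u1 [v1 [s1 ->]]] /triP[u2 [v2 [s2 ->]]].
have [ev|nv12] := eqVneq v1 v2; last first.
  by have [L [t1 t2]] := tri_swap_diamond s1 s2 nv12; exists L; split; exact: Mfam_tri.
subst v2; case: (ltngtP u1 u2) => [lt12|lt21|/val_inj->].
- exists (swap I u1 v1); split; first exact: Mfam_self.
  exact: Mfam_tri (tri_swap_same s1 s2 lt12).
- exists (swap I u2 v1); split; last exact: Mfam_self.
  exact: Mfam_tri (tri_swap_same s2 s1 lt21).
- by exists (swap I u2 v1); split; exact: Mfam_self.
Qed.

Lemma min_of_unique I K1 K2 : min_of I K1 -> min_of I K2 -> K1 = K2.
Proof.
have [m] := ubnP (weight I); elim: m I K1 K2 => // m IH I K1 K2 lt_wI [mK1 minK1] [mK2 minK2].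
case: (Mfam_cases mK1) (Mfam_cases mK2) => [eK1|[J1 t1 mJ1K1]] [eK2|[J2 t2 mJ2K2]].
- by rewrite eK1 eK2.
- by case: minK1; exists J2; rewrite eK1; split; first exact: t2.1.
- by case: minK2; exists J1; rewrite eK2; split; first exact: t1.1.
have [L [mJ1L mJ2L]] := tri_local_confluence t1 t2.
have [K [mLK minK]] := exists_min_of L.
have lt_w1 := leq_trans (tri_weight t1) lt_wI; have lt_w2 := leq_trans (tri_weight t2) lt_wI.
have -> : K1 = K by apply: (IH J1) => //; split=> //; exact: Mfam_trans mJ1L mLK.
suff -> : K2 = K by [].
by apply: (IH J2) => //; split=> //; exact: Mfam_trans mJ2L mLK.
Qed.

Lemma min_of_tri J' J : tri a J' J -> forall K, min_of J K <-> min_of J' K.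
Proof.
move=> t K; split=> [minJK|[mJ'K minK]]; last by split=> //; exact: Mfam_trans (Mfam_tri t) mJ'K.
have [K' [mJ'K' minK']] := exists_min_of J'.
by rewrite (min_of_unique minJK (conj (Mfam_trans (Mfam_tri t) mJ'K') minK')).
Qed.

Lemma min_of_rpath I s : maxfeas a I -> {in s, forall X, feasible a X} -> rpath I s ->
  forall K, min_of I K <-> min_of (last I s) K.
Proof.
elim: s I => [//|I' s IH] I mI fs /= [st p] K.
have fs' : {in s, forall X, feasible a X} by move=> X Xs; apply: fs; rewrite inE Xs orbT.
have [mI' [t|t]] := rstep_tri mI (fs I' (mem_head _ _)) st.
- by rewrite (min_of_tri t); exact: IH.
- by rewrite -(min_of_tri t); exact: IH.
Qed.

Lemma Mfam_reconf I K : maxfeas a I -> Mfam a I K -> reconf a I K /\ reconf a K I.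
Proof.
move=> mI; elim=> [|J J' _ [rIJ rJI] t].
  by split; exists [::]; split=> //; exact: mI.1.
have [sJJ' sJ'J] := tri_rstep t; have fJ := t.2.1.1; have fJ' := t.1.1.
by split; [apply: reconf_trans rIJ _ | apply: reconf_trans _ rJI]; exact: reconf_rstep.
Qed.

Lemma reconf_tri_equiv I J : maxfeas a I -> reconf a I J -> tri_equiv a I J.
Proof.
move=> mI [s [_ [fs [p <-]]]]; have [K [mIK minK]] := exists_min_of I.
by have [mJK _] := (min_of_rpath mI fs p K).1 (conj mIK minK); exists K.
Qed.

Lemma tri_equiv_reconf I J : maxfeas a I -> maxfeas a J -> tri_equiv a I J -> reconf a I J.
Proof.
move=> mI mJ [K [mIK mJK _]].
exact: reconf_trans (Mfam_reconf mI mIK).1 (Mfam_reconf mJ mJK).2.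
Qed.

End PatienceSorting.

Unset Implicit Arguments.

Theorem lemma3 (n : nat) (a : 'I_n -> nat)
  (a_inj : injective a) (a_range : forall j, 1 <= a j <= n)
  (I J : {set 'I_n.+1}) :
  maxfeas a I -> maxfeas a J ->
  (reconf a I J <-> tri_equiv a I J).
Proof.
have a_gt0 j : 0 < a j by case/andP: (a_range j).
move=> mI mJ; split; first exact: reconf_tri_equiv.
exact: tri_equiv_reconf.
Qed.
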